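(* For each integer $n\geq 2$, the Johnson graph $J(n,2)$ satisfies $\operatorname{tww}(J(n,2))=\operatorname{lb}_1(J(n,2))$, and this value equals $2(n-3)$ if $n\geq 5$ and $0$ otherwise.
   Context: All graphs are finite and simple. The Johnson graph $J(n,2)$ has vertex set the 2-element subsets of $\{1,\dots,n\}$, two vertices $S,S'$ being adjacent iff $|S\cap S'|=1$. A trigraph is a graph whose edges are each colored red or black; a graph is viewed as a trigraph with all edges black; the red degree of a vertex is the number of red edges incident to it. For a partition $\mathcal{P}$ of $V(G)$, the quotient trigraph $G/\mathcal{P}$ has vertex set $\mathcal{P}$; two distinct parts $U,W$ are joined by a black edge if every pair $\{u,w\}$ with $u\in U,w\in W$ is a black edge of $G$, are non-adjacent if no such pair is an edge, and are joined by a red edge otherwise. A contraction sequence of an $N$-vertex trigraph $G$ is a sequence $\mathcal{P}_N,\dots,\mathcal{P}_1$ of partitions of $V(G)$ where $\mathcal{P}_N$ is the partition into singletons and each $\mathcal{P}_i$ arises from $\mathcal{P}_{i+1}$ by merging two parts; its width is the maximum red degree over all $G/\mathcal{P}_i$, and $\operatorname{tww}(G)$ is the minimum width of a contraction sequence. For $|V(G)|\geq 2$, $\operatorname{lb}_1(G)$ is the minimum over all 2-element subsets $\{u,v\}\subseteq V(G)$ of the maximum red degree of $G/\mathcal{P}$ where $\mathcal{P}$ has $\{u,v\}$ as its only non-singleton part; $\operatorname{lb}_1(G)=0$ if $|V(G)|=1$. *)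

From mathcomp Require Import all_boot.
Set Implicit Arguments. Unset Strict Implicit. Unset Printing Implicit Defensive.

Section TwinWidth.
Variable T : finType.
(* A (simple) graph on T, given by its adjacency relation e; viewed as a
   trigraph all of whose edges are black. *)
Variable e : rel T.

Definition black_parts (U W : {set T}) : bool :=
  [forall u in U, forall w in W, e u w].
Definition nonadj_parts (U W : {set T}) : bool :=
  [forall u in U, forall w in W, ~~ e u w].
Definition red_parts (U W : {set T}) : bool :=
  ~~ black_parts U W && ~~ nonadj_parts U W.

Definition red_degree (P : {set {set T}}) (U : {set T}) : nat :=
  #|[set W in P | (W != U) && red_parts U W]|.

Definition max_red_degree (P : {set {set T}}) : nat :=
  \max_(U in P) red_degree P U.

Definition singleton_partition : {set {set T}} := [set [set x] | x : T].

Definition contraction_step (P Q : {set {set T}}) : bool :=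
  [exists U in P, exists W in P,
     (U != W) && (Q == (U :|: W) |: ((P :\ U) :\ W))].

(* A contraction sequence P_N, ..., P_1 (N = |V(G)|), listed as the sequence
   [:: P_N; P_(N-1); ...; P_1]. *)
Definition contraction_sequence (s : seq {set {set T}}) : bool :=
  if s is P :: s' then
    [&& P == singleton_partition, path contraction_step P s' & size s == #|T|]
  else false.

Definition cs_width (s : seq {set {set T}}) : nat :=
  \max_(P <- s) max_red_degree P.

Definition is_twin_width (k : nat) : Prop :=
  (exists2 s, contraction_sequence s & cs_width s = k) /\
  (forall s, contraction_sequence s -> k <= cs_width s).

Definition pair_partition (u v : T) : {set {set T}} :=
  [set [set u; v]] :|: [set [set x] | x in ~: [set u; v]].

Definition lb1 : nat :=
  if #|T| <= 1 then 0
  else \big[minn/#|T|]_(p : T * T | p.1 != p.2) max_red_degree (pair_partition p.1 p.2).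

End TwinWidth.

Definition johnson2 (n : nat) : finType := {A : {set 'I_n} | #|A| == 2}.

Definition johnson2_rel (n : nat) : rel (johnson2 n) :=
  fun A B => #|val A :&: val B| == 1.

(* Contracting two vertices u, v of J(n,2) creates a red edge towards every
   vertex adjacent to exactly one of them, since all other parts are
   singletons.  For n >= 5 there are at least 2(n-3) such vertices: the pairs
   made of an element of the symmetric difference of u and v and an element
   outside their union.  So lb_1 >= 2(n-3), and lb_1 never exceeds the width
   of a contraction sequence, whose second partition is of this form.

   For n >= 5 a sequence of width 2(n-3) absorbs the ground elements one at a
   time, from the largest.  Once j, ..., n-1 are absorbed, the pairs inside
   them form one part and, for each a < j, the pairs {a, b} with b >= j form
   the star of a.  Absorbing j-1 moves each pair {k, j-1} into the star of k,
   for k = 0, ..., j-2, and then merges the star of j-1 into the big part.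

   For n <= 4 every vertex has at most one non-neighbour, so two non-adjacent
   vertices are twins; contracting these pairs first, and then anything,
   keeps every edge black. *)

From Stdlib Require Import Btauto.
From mathcomp Require Import all_boot all_order zify.
Set Implicit Arguments. Unset Strict Implicit. Unset Printing Implicit Defensive.
Import Order.TTheory.

Section Fibers.
Variables (T : finType) (L : eqType).
Implicit Types (f g : T -> L) (x y : T).

Definition fiber f x : {set T} := [set y | f x == f y].
Definition fibers f : {set {set T}} := preim_partition f [set: T].

Lemma mem_fiber f x y : (y \in fiber f x) = (f x == f y).
Proof. by rewrite inE. Qed.

Lemma fiber_in_fibers f x : fiber f x \in fibers f.
Proof.
by apply/imsetP; exists x; rewrite ?inE //; apply/setP => y; rewrite !inE.
Qed.

Lemma fibersP f U : U \in fibers f -> exists x, U = fiber f x.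
Proof. by case/imsetP=> x _ ->; exists x; apply/setP => y; rewrite !inE. Qed.

Lemma eq_fiber f x y : (fiber f x == fiber f y) = (f x == f y).
Proof.
apply/eqP/eqP => fxy; last by apply/setP => z; rewrite !mem_fiber fxy.
by have := mem_fiber f x x; rewrite eqxx fxy mem_fiber => /eqP.
Qed.

Lemma fibers_partition f : partition (fibers f) [set: T].
Proof. exact: preim_partitionP. Qed.

Lemma eq_fibers f g :
  (forall x y, (f x == f y) = (g x == g y)) -> fibers f = fibers g.
Proof.
move=> fg; have fiber_fg x : fiber f x = fiber g x.
  by apply/setP => y; rewrite !mem_fiber fg.
apply/setP => U; apply/idP/idP => /fibersP [x ->].
  by rewrite fiber_fg fiber_in_fibers.
by rewrite -fiber_fg fiber_in_fibers.
Qed.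

Lemma eq_fibers_fun f g : f =1 g -> fibers f = fibers g.
Proof. by move=> fg; apply: eq_fibers => x y; rewrite !fg. Qed.

Lemma fibers_inj f : injective f -> fibers f = singleton_partition T.
Proof.
move=> f_inj; have fiber1 x : fiber f x = [set x].
  by apply/setP => y; rewrite mem_fiber inE eq_sym; apply/eqP/eqP => [/f_inj|->].
apply/setP => U; apply/idP/imsetP => [/fibersP [x ->]|[x _ ->]].
  by exists x; rewrite ?fiber1.
by rewrite -fiber1 fiber_in_fibers.
Qed.

Lemma card_fibers_gt1 f : 1 < #|fibers f| -> exists x y, f x != f y.
Proof.
case/card_gt1P => _ [_ [/fibersP [x ->] /fibersP [y ->]]].
by rewrite eq_fiber; exists x, y.
Qed.

Definition relabel f (l1 l2 : L) x := if f x == l2 then l1 else f x.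

Lemma fibers_relabel_fresh f l1 l2 :
  (forall x, f x != l1) -> fibers (relabel f l1 l2) = fibers f.
Proof.
move=> fresh; apply: eq_fibers => x y; rewrite /relabel.
case: (f x =P l2) => [->|fx]; case: (f y =P l2) => [->|fy] //.
- by rewrite !eqxx.
- by rewrite [l1 == _]eq_sym (negbTE (fresh y)); apply/esym/eqP => fxy; apply: fy.
- by rewrite (negbTE (fresh x)); apply/esym/eqP => fxy; apply: fx.
Qed.

Lemma contraction_step_relabel f l1 l2 x1 x2 :
  f x1 = l1 -> f x2 = l2 -> l1 != l2 ->
  contraction_step (fibers f) (fibers (relabel f l1 l2)).
Proof.
move=> fx1 fx2 l12; set g := relabel f l1 l2.
have g_l1 y : (g y == l1) = (f y == l1) || (f y == l2).
  by rewrite /g /relabel; case: (f y =P l2) => [->|_]; rewrite ?eqxx ?orbT ?orbF.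
have g_other y z : f y != l1 -> f y != l2 -> (g z == f y) = (f z == f y).
  move=> y1 y2; rewrite /g /relabel; case: (f z =P l2) => [->|//].
  by rewrite eq_sym (negbTE y1) eq_sym (negbTE y2).
have gx1 : g x1 = l1 by rewrite /g /relabel fx1 (negbTE l12).
have merged : fiber f x1 :|: fiber f x2 = fiber g x1.
  apply/setP => z; rewrite in_setU !mem_fiber fx1 fx2 gx1.
  by rewrite (eq_sym l1 (g z)) g_l1 (eq_sym l1) (eq_sym l2).
have kept y : f y != l1 -> f y != l2 -> fiber f y = fiber g y.
  move=> y1 y2; apply/setP => z; rewrite !mem_fiber.
  have -> : g y = f y by rewrite /g /relabel (negbTE y2).
  by rewrite (eq_sym (f y) (g z)) g_other // eq_sym.
apply/existsP; exists (fiber f x1); rewrite fiber_in_fibers /=.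
apply/existsP; exists (fiber f x2); rewrite fiber_in_fibers /= eq_fiber fx1 fx2 l12.
apply/eqP/setP => Z; rewrite !inE; apply/idP/idP.
  case/fibersP => y ->; have [y12|] := boolP ((f y == l1) || (f y == l2)).
    by rewrite merged eq_fiber gx1 g_l1 y12.
  rewrite negb_or => /andP [y1 y2].
  by rewrite -kept // !eq_fiber fx1 fx2 y1 y2 fiber_in_fibers orbT.
case/orP => [/eqP -> | /and3P [y2 y1 /fibersP [y eZ]]].
  by rewrite merged fiber_in_fibers.
move: y1 y2; rewrite eZ !eq_fiber fx1 fx2 => y1 y2.
by rewrite kept // fiber_in_fibers.
Qed.

End Fibers.

Section Quotients.
Variables (T : finType) (e : rel T).

Lemma homogeneous_not_red (U W : {set T}) :
  (forall u u' w, u \in U -> u' \in U -> w \in W -> e u w = e u' w) ->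
  (forall u w w', u \in U -> w \in W -> w' \in W -> e u w = e u w') ->
  ~~ red_parts e U W.
Proof.
move=> homU homW; rewrite /red_parts negb_and !negbK.
case: (boolP (black_parts e U W)) => //= /forallPn [u].
rewrite negb_imply => /andP [uU /forallPn [w]].
rewrite negb_imply => /andP [wW /negbTE euw].
apply/forallP => u'; apply/implyP => u'U; apply/forallP => w'; apply/implyP => w'W.
by rewrite -(homU u u' w') // -(homW u w w') // euw.
Qed.

Lemma red_degree_fiber_le (L : eqType) (f : T -> L) x (cand : seq L) :
  (forall y, f y != f x -> red_parts e (fiber f x) (fiber f y) -> f y \in cand) ->
  red_degree e (fibers f) (fiber f x) <= size cand.
Proof.
move=> red_cand.
pose label (W : {set T}) := if [pick y in W] is Some y then f y else f x.
have label_fiber y : label (fiber f y) = f y.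
  rewrite /label; case: pickP => [z|/(_ y)]; first by rewrite mem_fiber => /eqP.
  by rewrite mem_fiber eqxx.
rewrite /red_degree cardE -(size_map label); apply: uniq_leq_size.
  rewrite map_inj_in_uniq ?enum_uniq // => W1 W2.
  rewrite !mem_enum !inE => /andP [/fibersP [y1 ->] _] /andP [/fibersP [y2 ->] _].
  by rewrite !label_fiber => fy12; apply/eqP; rewrite eq_fiber fy12.
move=> l /mapP [W]; rewrite mem_enum inE => /andP [/fibersP [y ->]].
rewrite eq_fiber => /andP [fyx red] ->; rewrite label_fiber.
by apply: red_cand; rewrite // eq_sym.
Qed.

Lemma card_contraction_step (P Q : {set {set T}}) D :
  partition P D -> contraction_step P Q -> #|Q| = #|P|.-1.
Proof.
move=> partP /existsP [U /andP [UP /existsP [W /andP [WP /andP [UW /eqP ->]]]]].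
have UW_notin : U :|: W \notin (P :\ U) :\ W.
  rewrite !inE; apply/negP => /and3P [WUW UUW UWP].
  have /set0Pn [x xU] : U != set0 := partition_neq0 partP UP.
  have /trivIsetP /(_ _ _ UWP UP UUW) := partition_trivIset partP.
  by move/disjoint_setI0/setP/(_ x); rewrite !inE xU.
by rewrite cardsU1 UW_notin (cardsD1 U P) UP (cardsD1 W (P :\ U)) !inE eq_sym UW WP.
Qed.

Lemma card_singleton_partition : #|singleton_partition T| = #|T|.
Proof. by rewrite card_imset //; exact: set1_inj. Qed.

Lemma contraction_step_singleton Q :
  contraction_step (singleton_partition T) Q ->
  exists u v, u != v /\ Q = pair_partition u v.
Proof.
move=> /existsP [_ /andP [/imsetP [u _ ->] /existsP [_ /andP [/imsetP [v _ ->]]]]].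
move=> /andP [uv /eqP ->]; have {}uv : u != v by apply: contraNneq uv => ->.
exists u, v; split => //; apply/setP => Z; rewrite /pair_partition !inE.
apply/orP/orP => -[->|]; [by left | | by left |].
  move=> /and3P [Zv Zu /imsetP [x _ eZ]]; right; rewrite eZ imset_f // !inE.
  by rewrite negb_or; apply/andP; split; [apply: contra Zu | apply: contra Zv];
     rewrite eZ => /eqP ->.
move=> /imsetP [x]; rewrite !inE negb_or => /andP [xu xv] ->; right.
rewrite imset_f // andbT.
by apply/andP; split; [apply: contra xv | apply: contra xu] => /eqP /set1_inj ->.
Qed.

Lemma red_parts_pair_set1 u v w : e u w != e v w -> red_parts e [set u; v] [set w].
Proof.
move=> euvw; rewrite /red_parts /black_parts /nonadj_parts.
apply/andP; split; apply/negP => /forallP all_uv;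
  move: (all_uv u) (all_uv v); rewrite !inE !eqxx orbT /= => /forallP /(_ w) + /forallP /(_ w);
  by rewrite !inE eqxx /=; move: euvw; case: (e u w); case: (e v w).
Qed.

Definition distinguishers (u v : T) : {set T} :=
  [set w | [&& w != u, w != v & e u w != e v w]].

Lemma distinguishers_le_max_red_degree u v :
  #|distinguishers u v| <= max_red_degree e (pair_partition u v).
Proof.
have uv_part : [set u; v] \in pair_partition u v by rewrite !inE eqxx.
apply: leq_trans (leq_bigmax_cond _ uv_part).
rewrite /red_degree -(card_imset _ (@set1_inj _)); apply: subset_leq_card.
apply/subsetP => W /imsetP [w]; rewrite inE => /and3P [wu wv euvw] ->.
rewrite !inE imset_f ?orbT ?inE ?negb_or ?wu ?wv //=.
apply/andP; split; last exact: red_parts_pair_set1.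
by apply/eqP => /setP /(_ u); rewrite !inE eqxx eq_sym (negbTE wu).
Qed.

Lemma lb1_le_pair u v : u != v -> lb1 e <= max_red_degree e (pair_partition u v).
Proof.
by move=> uv; rewrite /lb1; case: ifP => // _; exact: (@bigmin_le_cond _ nat _ _ (u, v)).
Qed.

Lemma lb1_ge_distinguishers m : 1 < #|T| ->
  (forall u v, u != v -> m <= #|distinguishers u v|) -> m <= lb1 e.
Proof.
move=> T_gt1 mD; rewrite /lb1 ifN -?ltnNge //.
apply: (@le_bigmin _ nat) => [|[u v] /= uv].
  by have [u [v [_ _ /mD/leq_trans]]] := card_gt1P T_gt1; apply; exact: max_card.
exact: leq_trans (mD _ _ uv) (distinguishers_le_max_red_degree u v).
Qed.

Lemma contraction_sequence_of_invariant (I : {set {set T}} -> Prop) k :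
  (forall P, I P -> partition P [set: T]) ->
  (forall P, I P -> max_red_degree e P <= k) ->
  (forall P, I P -> 1 < #|P| -> exists2 Q, I Q & contraction_step P Q) ->
  I (singleton_partition T) -> 0 < #|T| ->
  exists2 s, contraction_sequence s & cs_width e s <= k.
Proof.
move=> I_part I_width I_step I_init T_gt0.
have tail m (P : {set {set T}}) : #|P| = m.+1 -> I P -> exists s,
    [/\ path (@contraction_step T) P s, size s = m &
        all (fun Q => max_red_degree e Q <= k) s].
  elim: m P => [|m IHm] P card_P IP; first by exists [::].
  have [Q IQ PQ] : exists2 Q, I Q & contraction_step P Q by apply: I_step; rewrite ?card_P.
  have card_Q : #|Q| = m.+1 by rewrite (card_contraction_step (I_part _ IP) PQ) card_P.
  have [s [Qs size_s width_s]] := IHm Q card_Q IQ.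
  by exists (Q :: s); rewrite /= PQ Qs size_s I_width.
have card_init : #|singleton_partition T| = #|T|.-1.+1.
  by rewrite card_singleton_partition prednK.
have [s [init_s size_s width_s]] := tail _ _ card_init I_init.
exists (singleton_partition T :: s); first by rewrite /= eqxx init_s /= size_s prednK.
apply/bigmax_leqP_seq => Q; rewrite inE => /orP [/eqP ->|Qs] _; first exact: I_width.
exact: (allP width_s).
Qed.

Lemma lb1_le_width s : contraction_sequence s -> lb1 e <= cs_width e s.
Proof.
case: s => [//|P0 s] /and3P [/eqP -> init_s /eqP size_s].
have [T_le1|T_gt1] := leqP #|T| 1; first by rewrite /lb1 T_le1.
case: s init_s size_s => [_ size_s|P1 s /andP [step _] _].
  by rewrite -size_s in T_gt1.
have [u [v [uv ->]]] := contraction_step_singleton step.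
by apply: leq_trans (lb1_le_pair uv) _; apply: leq_bigmax_seq; rewrite ?inE ?eqxx ?orbT.
Qed.

Lemma twin_width_lb1 k : k <= lb1 e ->
  (exists2 s, contraction_sequence s & cs_width e s <= k) ->
  is_twin_width e (lb1 e) /\ lb1 e = k.
Proof.
move=> k_le [s cs_s width_s].
have lb1_k : lb1 e = k by apply/eqP; rewrite eqn_leq k_le (leq_trans (lb1_le_width cs_s)).
split=> //; split=> [|s'/lb1_le_width //].
by exists s => //; apply/eqP; rewrite eqn_leq lb1_le_width // lb1_k width_s.
Qed.

End Quotients.

Section CoMatching.
Variables (T : finType) (e : rel T).
Hypothesis e_sym : symmetric e.

Definition nonadjacent u w := (u != w) && ~~ e u w.

Lemma nonadjacent_sym : symmetric nonadjacent.
Proof. by move=> u w; rewrite /nonadjacent e_sym eq_sym. Qed.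

Hypothesis nonadjacent_uniq : forall u w w', nonadjacent u w -> nonadjacent u w' -> w = w'.

Definition merged_or_alone (f : T -> T) :=
  forall u w, nonadjacent u w -> f u = f w \/ forall x, f x = f u -> x = u.

Lemma max_red_degree_merged_or_alone f :
  merged_or_alone f -> max_red_degree e (fibers f) = 0.
Proof.
move=> f_ok; apply/eqP; rewrite -leqn0; apply/bigmax_leqP => _ /fibersP [x ->].
have alone u w : f u != f w -> ~~ e u w -> forall z, f z = f u -> z = u.
  move=> fuw euw; have uw : u != w by apply: contraNneq fuw => ->.
  by case: (f_ok u w); rewrite /nonadjacent ?uw ?euw // => /eqP; rewrite (negbTE fuw).
have hom u u' w : f u = f u' -> f u != f w -> e u w = e u' w.
  move=> fuu' fuw; case euw: (e u w); case eu'w: (e u' w) => //.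
    have fu'w : f u' != f w by rewrite -fuu'.
    by move: euw; rewrite (alone u' w fu'w (negbT eu'w) u fuu') eu'w.
  by move: eu'w; rewrite (alone u w fuw (negbT euw) u') ?euw.
apply: (@red_degree_fiber_le _ e _ f x [::]) => y fyx.
apply: contraTT => _; apply: homogeneous_not_red => [u u' w|u w w']; rewrite !mem_fiber.
  move=> /eqP fu /eqP fu' /eqP fw; apply: hom; first by rewrite -fu -fu'.
  by rewrite -fu -fw eq_sym.
move=> /eqP fu /eqP fw /eqP fw'; rewrite ![e u _]e_sym.
by apply: hom; rewrite -?fu -fw // -fw'.
Qed.

Lemma merged_or_alone_step f : merged_or_alone f -> 1 < #|fibers f| ->
  exists2 g, merged_or_alone g & contraction_step (fibers f) (fibers g).
Proof.
move=> f_ok card_f; case: (boolP [exists u, exists w, nonadjacent u w && (f u != f w)]).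
  case/existsP => u /existsP [w /andP [uw fuw]].
  exists (relabel f (f u) (f w)); last exact: contraction_step_relabel.
  move=> x y xy; rewrite /relabel; case: (f_ok x y xy) => [->|x_alone]; first by left.
  have [exu|xu] := eqVneq x u.
    by left; subst x; rewrite (nonadjacent_uniq xy uw) eqxx (negbTE fuw).
  have [exw|xw] := eqVneq x w.
    left; subst x; rewrite nonadjacent_sym in uw.
    by rewrite (nonadjacent_uniq xy uw) eqxx if_same.
  have fxw : f x != f w by apply/eqP => /esym/x_alone wx; rewrite wx eqxx in xw.
  have fxu : f x != f u by apply/eqP => /esym/x_alone ux; rewrite ux eqxx in xu.
  right => z; rewrite (negbTE fxw); case: ifP => [_ fxu'|_]; last exact: x_alone.
  by rewrite fxu' eqxx in fxu.
rewrite negb_exists => /forallP no_split.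
have merged u w : nonadjacent u w -> f u = f w.
  by move=> uw; apply/eqP; have /existsPn/(_ w) := no_split u; rewrite uw negbK.
have [x [y fxy]] := card_fibers_gt1 card_f.
exists (relabel f (f x) (f y)); last exact: contraction_step_relabel.
by move=> u w /merged fuw; left; rewrite /relabel fuw.
Qed.

Lemma comatching_contraction_sequence : 0 < #|T| ->
  exists2 s, contraction_sequence s & cs_width e s <= 0.
Proof.
apply: (contraction_sequence_of_invariant
          (I := fun P => exists2 f, merged_or_alone f & P = fibers f)).
- by move=> _ [f _ ->]; exact: fibers_partition.
- by move=> _ [f f_ok ->]; rewrite max_red_degree_merged_or_alone.
- move=> _ [f f_ok ->] /(merged_or_alone_step f_ok) [g g_ok fg].
  by exists (fibers g) => //; exists g.
- by exists id; [move=> u w _; right | rewrite fibers_inj].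
Qed.

End CoMatching.

(* Splits on the conditions of the innermost [if]s until none is left. *)
Ltac case_ifs := repeat (match goal with |- context [if ?c then _ else _] =>
  lazymatch c with context [if _ then _ else _] => fail
  | _ => case: (boolP c) => ? end end; rewrite /=).

Ltac lia_pairs :=
  repeat match goal with H : context [(_, _) == (_, _)] |- _ => rewrite xpair_eqE in H end;
  rewrite ?xpair_eqE; try (apply/eqP; rewrite ?xpair_eqE); lia.

Section StageLabels.
Variable n : nat.

(* The label of the part of the pair {a < b} at stage (j, k): [(n, n)] for the
   pairs inside the absorbed elements j, ..., n-1, [(a, n)] for the star of
   a < j, which also contains {a, j-1} once a < k, and [(a, b)] for a pair
   that is still a singleton part.  At the last stage (0, 0) there is a
   single part. *)
Definition stage_label (j k a b : nat) : nat * nat :=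
  if j <= a then (n, n)
  else if (j <= b) || ((b == j.-1) && (a < k)) then (a, n) else (a, b).

Definition stage j k := ((k < j) && (j <= n.-1)) || ((j == 0) && (k == 0)).

Lemma stage_bounds j k : stage j k -> k <= j.-1 /\ j <= n.-1.
Proof. by rewrite /stage; lia. Qed.

Lemma stage_label_next j k a b : k.+1 < j -> j <= n.-1 -> a < b -> b < n ->
  stage_label j k.+1 a b =
  if stage_label j k a b == (k, j.-1) then (k, n) else stage_label j k a b.
Proof. by move=> *; rewrite /stage_label; case_ifs; lia_pairs. Qed.

Lemma stage_label_descend j a b : 0 < j -> j <= n.-1 -> a < b -> b < n ->
  stage_label j.-1 0 a b =
  if stage_label j j.-1 a b == (j.-1, n) then (n, n) else stage_label j j.-1 a b.
Proof. by move=> *; rewrite /stage_label; case_ifs; lia_pairs. Qed.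

Lemma stage_label_first_inj a b a' b' : a < b -> b < n -> a' < b' -> b' < n ->
  stage_label n.-1 0 a b = stage_label n.-1 0 a' b' -> a = a' /\ b = b'.
Proof.
by move=> ? ? ? ?; rewrite /stage_label; case_ifs; move/eqP; rewrite ?xpair_eqE; lia.
Qed.

Lemma stage_labelP j k a b : a < b -> b < n -> j <= n.-1 ->
  [\/ j <= a /\ stage_label j k a b = (n, n),
      [/\ a < j, (j <= b) || ((b == j.-1) && (a < k)) & stage_label j k a b = (a, n)] |
      [/\ b < j, ~~ ((b == j.-1) && (a < k)) & stage_label j k a b = (a, b)]].
Proof.
move=> ab bn jn; rewrite /stage_label; case: (leqP j a) => ja; first by constructor 1.
by case: ifP => star; [constructor 2 | constructor 3; split => //; lia].
Qed.

Definition pair_adj (a b c d : nat) :=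
  ~~ ((a == c) && (b == d)) && [|| a == c, a == d, b == c | b == d].

(* Over-approximates the red edges of the quotient at stage (j, k), in terms of
   labels; [red_candidates j k l] lists the labels related to [l]. *)
Definition red_labels j k (l l' : nat * nat) : bool :=
  [|| [&& l.1 == n, l'.1 < n & l'.2 == n],
      [&& l'.1 == n, l.1 < n & l.2 == n],
      [&& l.1 < n, l.2 == n, l'.1 < n, l'.2 == n, l.1 != l'.1 &
         [|| j <= n.-2, (l.1 < k) && (l'.1 < j.-1) | (l'.1 < k) && (l.1 < j.-1)]],
      [&& l.1 < k, l.2 == n, l'.2 == j.-1 & k <= l'.1]
    | [&& l'.1 < k, l'.2 == n, l.2 == j.-1 & k <= l.1] ].

Lemma red_labels_sym j k : symmetric (red_labels j k).
Proof. by case=> x y [x' y']; rewrite /red_labels /= (eq_sym x' x); btauto. Qed.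

Lemma pair_adj_star j k a b b' c d : k <= j.-1 -> j <= n.-1 -> a < j ->
  (j <= b) || (b == j.-1) && (a < k) -> (j <= b') || (b' == j.-1) && (a < k) ->
  b < n -> b' < n -> c < d -> d < n ->
  stage_label j k c d != (a, n) -> ~~ red_labels j k (a, n) (stage_label j k c d) ->
  pair_adj a b c d = pair_adj a b' c d.
Proof.
move=> kj jn aj star star' bn bn' cd dn.
case: (stage_labelP k cd dn jn) => [[jc ->]|[cj star_c ->]|[dj single_cd ->]] ca red_ca.
- by move: red_ca; rewrite /red_labels /=; lia.
- have {}ca : c != a by apply: contra ca => /eqP ->.
  have far : ~~ [|| j <= n.-2, (a < k) && (c < j.-1) | (c < k) && (a < j.-1)].
    apply: contra red_ca => near; rewrite /red_labels /= !eqxx /= (eq_sym a c) ca near.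
    by rewrite !andbT; apply/orP; right; apply/orP; right; apply/orP; left; lia.
  have [ak|ka] := ltnP a k; last by have -> : b = b' by lia.
  have adj x : (j <= x) || (x == j.-1) && (a < k) -> x < n -> pair_adj a x c d.
    by move=> x_star xn; rewrite /pair_adj; lia.
  by rewrite !adj.
- have not_star : ~~ [&& a < k, d == j.-1 & k <= c].
    by apply: contra red_ca => star_cd; rewrite /red_labels /= !eqxx /= star_cd !orbT.
  have adj x : (j <= x) || (x == j.-1) && (a < k) -> pair_adj a x c d = (a == c) || (a == d).
    move=> x_star; have [/negbTE xc /negbTE xd] : x != c /\ x != d by lia.
    by rewrite /pair_adj xc xd andbF !orbF.
  by rewrite !adj.
Qed.

Lemma pair_adj_stage_homogeneous j k a b a' b' c d : stage j k ->
  a < b -> b < n -> a' < b' -> b' < n -> c < d -> d < n ->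
  stage_label j k a b = stage_label j k a' b' ->
  stage_label j k c d != stage_label j k a b ->
  ~~ red_labels j k (stage_label j k a b) (stage_label j k c d) ->
  pair_adj a b c d = pair_adj a' b' c d.
Proof.
move=> /stage_bounds [kj jn] ab bn ab' bn' cd dn.
case: (stage_labelP k ab bn jn) => [[ja ->]|[aj star ->]|[bj _ ->]];
case: (stage_labelP k ab' bn' jn) => [[ja' ->]|[aj' star' ->]|[bj' _ ->]] /eqP;
rewrite xpair_eqE; try lia.
- move=> _; case: (stage_labelP k cd dn jn) => [[_ ->]|[cj _ ->]|[dj _ ->]].
  + by rewrite eqxx.
  + by rewrite /red_labels /=; lia.
  + by rewrite /pair_adj; lia.
- by move=> /andP [/eqP eaa' _]; subst a'; exact: pair_adj_star.
- by move=> /andP [/eqP -> /eqP ->].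
Qed.

Definition red_candidates j k (l : nat * nat) : seq (nat * nat) :=
  if l.1 == n then [seq (i, n) | i <- iota 0 j]
  else if l.2 == n then
    (if j <= n.-2 then [:: (n, n)] else [::]) ++
    [seq (i, n) | i <- [seq i <- iota 0 (if j <= n.-2 then j else j.-1) | i != l.1]] ++
    (if l.1 < k then [seq (i, j.-1) | i <- iota k (j.-1 - k)] else [::])
  else if (l.2 == j.-1) && (k <= l.1) then [seq (i, n) | i <- iota 0 k] else [::].

Lemma mem_map_pair_r (z x y : nat) s :
  ((x, y) \in [seq (i, z) | i <- s]) = (y == z) && (x \in s).
Proof.
by apply/mapP/andP => [[i si [-> ->]]|[/eqP -> xs]]; [rewrite eqxx | exists x].
Qed.

Lemma size_filter_iota_neq m x : size [seq i <- iota 0 m | i != x] = m - (x < m).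
Proof.
rewrite size_filter -[count _ _]/(count (predC (pred1 x)) (iota 0 m)).
have := count_predC (pred1 x) (iota 0 m).
by rewrite size_iota (count_uniq_mem _ (iota_uniq 0 m)) mem_iota /=; lia.
Qed.

Lemma mem_red_candidates j k a b c d : stage j k -> 4 < n ->
  a < b -> b < n -> c < d -> d < n ->
  stage_label j k c d != stage_label j k a b ->
  red_labels j k (stage_label j k a b) (stage_label j k c d) ->
  stage_label j k c d \in red_candidates j k (stage_label j k a b).
Proof.
move=> /stage_bounds [kj jn] n4 ab bn cd dn.
case: (stage_labelP k ab bn jn) => [[ja ->]|[aj star ->]|[bj single ->]];
case: (stage_labelP k cd dn jn) => [[jc ->]|[cj star' ->]|[dj single' ->]];
rewrite /red_labels /red_candidates /= ?xpair_eqE => ne red; case_ifs;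
rewrite ?inE ?mem_cat ?mem_map_pair_r ?mem_filter ?mem_iota ?inE ?xpair_eqE /=; lia.
Qed.

Lemma size_red_candidates j k a b : stage j k -> 4 < n -> a < b -> b < n ->
  size (red_candidates j k (stage_label j k a b)) <= 2 * (n - 3).
Proof.
move=> /stage_bounds [kj jn] n4 ab bn.
case: (stage_labelP k ab bn jn) => [[ja ->]|[aj star ->]|[bj single ->]];
rewrite /red_candidates /= ?eqxx; case_ifs;
rewrite ?size_cat ?size_map ?size_filter_iota_neq ?size_iota /=; lia.
Qed.

End StageLabels.

Lemma card_setI_set2 (T : finType) (X : {set T}) z x :
  x \notin X -> #|X :&: [set z; x]| = (z \in X).
Proof.
move=> xX; have -> : X :&: [set z; x] = X :&: [set z].
  by apply/setP => i; rewrite !inE; have [->|_] := eqVneq i x; rewrite ?(negbTE xX) ?orbF.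
have [zX|zX] := boolP (z \in X); first by rewrite (setIidPr _) ?cards1 ?sub1set.
by rewrite setIC disjoint_setI0 ?cards0 // disjoints1.
Qed.

Section Johnson.
Variable n : nat.
Local Notation T := (johnson2 n).
Local Notation e := (@johnson2_rel n).

Definition lo (v : T) : nat := if enum (val v) is x :: y :: _ then minn x y else 0.
Definition hi (v : T) : nat := if enum (val v) is x :: y :: _ then maxn x y else 0.

Lemma lohiP (v : T) : [/\ lo v < hi v, hi v < n &
  forall i : 'I_n, (i \in val v) = (i == lo v :> nat) || (i == hi v :> nat)].
Proof.
have mem_v i : (i \in val v) = (i \in enum (val v)) by rewrite mem_enum.
have := enum_uniq (val v); have : size (enum (val v)) = 2.
  by rewrite -cardE; apply/eqP; exact: (valP v).
rewrite /lo /hi; move: mem_v; case: (enum (val v)) => [|x [|y []]] //= mem_v _.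
rewrite inE andbT => xy; have {xy} : (x : nat) != y by [].
have := ltn_ord x; have := ltn_ord y.
move=> *; split; try lia; move=> i; rewrite mem_v !inE -!val_eqE /=; lia.
Qed.

Lemma lo_lt_hi (v : T) : lo v < hi v. Proof. by case: (lohiP v). Qed.
Lemma hi_lt_n (v : T) : hi v < n. Proof. by case: (lohiP v). Qed.
Lemma mem_johnson2 (v : T) (i : 'I_n) :
  (i \in val v) = (i == lo v :> nat) || (i == hi v :> nat).
Proof. by case: (lohiP v). Qed.

Lemma johnson2_eq (u w : T) : lo u = lo w -> hi u = hi w -> u = w.
Proof.
by move=> lo_uw hi_uw; apply/val_inj/setP => i; rewrite !mem_johnson2 lo_uw hi_uw.
Qed.

Lemma johnson2_of_pair a b : a < b -> b < n -> exists v : T, lo v = a /\ hi v = b.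
Proof.
move=> ab bn; pose oa : 'I_n := Ordinal (ltn_trans ab bn); pose ob : 'I_n := Ordinal bn.
have card_ab : #|[set oa; ob]| == 2 by rewrite cards2 -val_eqE /=; lia.
pose v : T := exist _ [set oa; ob] card_ab; exists v.
have := mem_johnson2 v oa; have := mem_johnson2 v ob.
have := mem_johnson2 v (Ordinal (ltn_trans (lo_lt_hi v) (hi_lt_n v))).
have := mem_johnson2 v (Ordinal (hi_lt_n v)).
have := lo_lt_hi v; rewrite /= !inE -!val_eqE /= !eqxx /=; lia.
Qed.

Lemma card_johnson2_meet_le1 (u v : T) : u != v -> #|val u :&: val v| <= 1.
Proof.
move=> uv; rewrite leqNgt; apply: contra uv => meet_gt1; apply/eqP/val_inj.
have [cu cv] := (eqP (valP u), eqP (valP v)).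
have <- : val u :&: val v = val u by apply/eqP; rewrite eqEcard subsetIl cu.
by apply/eqP; rewrite eqEcard subsetIr cv.
Qed.

Lemma johnson2_relE (u w : T) : e u w = pair_adj (lo u) (hi u) (lo w) (hi w).
Proof.
have [uw|uw] := eqVneq u w.
  by rewrite uw /johnson2_rel /pair_adj setIid (eqP (valP w)) !eqxx.
have neq : ~~ ((lo u == lo w) && (hi u == hi w)).
  by apply: contra uw => /andP [/eqP lo_uw /eqP hi_uw]; rewrite (johnson2_eq lo_uw hi_uw).
rewrite /johnson2_rel /pair_adj neq /=.
have -> : (#|val u :&: val w| == 1) = (0 < #|val u :&: val w|).
  by move: (card_johnson2_meet_le1 uw); case: #|_| => [|[|]].
rewrite card_gt0; apply/set0Pn/idP => [[i]|common].
  by rewrite inE !mem_johnson2; lia.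
have [o uo wo] : exists2 o, o \in val u & o \in val w.
  have [lo_w|lo_nw] := boolP ((lo u == lo w) || (lo u == hi w)).
    by exists (Ordinal (ltn_trans (lo_lt_hi u) (hi_lt_n u))); rewrite !mem_johnson2 /= ?eqxx.
  by exists (Ordinal (hi_lt_n u)); rewrite !mem_johnson2 /=; lia.
by exists o; rewrite inE uo wo.
Qed.

Lemma johnson2_rel_sym : symmetric e.
Proof. by move=> u w; rewrite /johnson2_rel setIC. Qed.

Lemma johnson2_card_gt0 : 1 < n -> 0 < #|T|.
Proof.
by move=> n1; have [v _] := johnson2_of_pair (ltnSn 0) n1; apply/card_gt0P; exists v.
Qed.

Lemma johnson2_card_gt1 : 2 < n -> 1 < #|T|.
Proof.
move=> n2; have [v [_ hv]] := johnson2_of_pair (ltnSn 0) (ltnW n2).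
have [w [_ hw]] := johnson2_of_pair (isT : 0 < 2) n2.
by apply/card_gt1P; exists v, w; split=> //; apply/eqP => evw; move: hv; rewrite evw hw.
Qed.

Definition stage_labeling j k (v : T) := stage_label n j k (lo v) (hi v).

Lemma stage_labeling_of_pair j k a b : a < b -> b < n ->
  exists v, stage_labeling j k v = stage_label n j k a b.
Proof. by move=> ab bn; have [v [<- <-]] := johnson2_of_pair ab bn; exists v. Qed.

Lemma johnson2_rel_stage_homogeneous j k (u u' w : T) : stage n j k ->
  stage_labeling j k u = stage_labeling j k u' ->
  stage_labeling j k w != stage_labeling j k u ->
  ~~ red_labels n j k (stage_labeling j k u) (stage_labeling j k w) -> e u w = e u' w.
Proof.
move=> st; rewrite !johnson2_relE.
exact: (pair_adj_stage_homogeneous st (lo_lt_hi u) (hi_lt_n u)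
          (lo_lt_hi u') (hi_lt_n u') (lo_lt_hi w) (hi_lt_n w)).
Qed.

Lemma max_red_degree_stage j k : stage n j k -> 4 < n ->
  max_red_degree e (fibers (stage_labeling j k)) <= 2 * (n - 3).
Proof.
move=> st n4; apply/bigmax_leqP => _ /fibersP [x ->].
apply: leq_trans (size_red_candidates st n4 (lo_lt_hi x) (hi_lt_n x)).
apply: red_degree_fiber_le => y yx red_xy.
have red_lab : red_labels n j k (stage_labeling j k x) (stage_labeling j k y).
  apply: contraLR red_xy => not_red; apply: homogeneous_not_red => [u u' w|u w w'];
    rewrite !mem_fiber => /eqP xu /eqP xu' /eqP yw.
    by apply: (johnson2_rel_stage_homogeneous st); rewrite -?xu -?xu' -?yw.
  rewrite ![e u _]johnson2_rel_sym; apply: (johnson2_rel_stage_homogeneous st);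
    by rewrite -?xu -?xu' -?yw // 1?eq_sym // red_labels_sym.
exact: mem_red_candidates st n4 (lo_lt_hi x) (hi_lt_n x) (lo_lt_hi y) (hi_lt_n y) yx red_lab.
Qed.

Lemma contraction_step_stage_next j k : k.+1 < j -> j <= n.-1 ->
  contraction_step (fibers (stage_labeling j k)) (fibers (stage_labeling j k.+1)).
Proof.
move=> kj jn; set f := stage_labeling j k.
rewrite (@eq_fibers_fun _ _ (stage_labeling j k.+1) (relabel f (k, n) (k, j.-1))); last first.
  by move=> v; rewrite /f /stage_labeling /relabel stage_label_next ?lo_lt_hi ?hi_lt_n.
have [x1 fx1] : exists v, f v = stage_label n j k k n.-1 by apply: stage_labeling_of_pair; lia.
have [x2 fx2] : exists v, f v = stage_label n j k k j.-1 by apply: stage_labeling_of_pair; lia.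
apply: (contraction_step_relabel (x1 := x1) (x2 := x2));
  by rewrite ?fx1 ?fx2 /stage_label; case_ifs; lia_pairs.
Qed.

Lemma contraction_step_stage_descend j : 0 < j -> j <= n.-2 ->
  contraction_step (fibers (stage_labeling j j.-1)) (fibers (stage_labeling j.-1 0)).
Proof.
move=> j_gt0 jn; set f := stage_labeling j j.-1.
rewrite (@eq_fibers_fun _ _ (stage_labeling j.-1 0) (relabel f (n, n) (j.-1, n))); last first.
  by move=> v; rewrite /f /stage_labeling /relabel stage_label_descend ?lo_lt_hi ?hi_lt_n //; lia.
have [x1 fx1] : exists v, f v = stage_label n j j.-1 j j.+1 by apply: stage_labeling_of_pair; lia.
have [x2 fx2] : exists v, f v = stage_label n j j.-1 j.-1 n.-1.
  by apply: stage_labeling_of_pair; lia.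
apply: (contraction_step_relabel (x1 := x1) (x2 := x2));
  by rewrite ?fx1 ?fx2 /stage_label; case_ifs; lia_pairs.
Qed.

Lemma fibers_stage_last :
  2 < n -> fibers (stage_labeling n.-1 n.-2) = fibers (stage_labeling n.-2 0).
Proof.
move=> n_gt2; set f := stage_labeling n.-1 n.-2.
rewrite (@eq_fibers_fun _ _ (stage_labeling n.-2 0) (relabel f (n, n) (n.-2, n))).
  apply/esym/fibers_relabel_fresh => v; rewrite /f /stage_labeling /stage_label.
  by have := lo_lt_hi v; have := hi_lt_n v; case_ifs; lia_pairs.
by move=> v; rewrite /f /stage_labeling /relabel stage_label_descend ?lo_lt_hi ?hi_lt_n //; lia.
Qed.

Lemma fibers_stage_first : 1 < n -> fibers (stage_labeling n.-1 0) = singleton_partition T.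
Proof.
move=> n_gt1; apply: fibers_inj => u w /eqP; rewrite /stage_labeling => /eqP lab_uw.
have [lo_uw hi_uw] :=
  stage_label_first_inj (lo_lt_hi u) (hi_lt_n u) (lo_lt_hi w) (hi_lt_n w) lab_uw.
exact: johnson2_eq.
Qed.

Definition stage_partition (P : {set {set T}}) :=
  exists2 jk : nat * nat, stage n jk.1 jk.2 & P = fibers (stage_labeling jk.1 jk.2).

Lemma stage_partition_step P : 4 < n -> stage_partition P -> 1 < #|P| ->
  exists2 Q, stage_partition Q & contraction_step P Q.
Proof.
move=> n4 [[[|j] k] /= st ->] card_P.
  have [x [y]] := card_fibers_gt1 card_P; have -> : k = 0 by move: st; rewrite /stage; lia.
  by rewrite /stage_labeling /stage_label !leq0n eqxx.
have [kj jn] : k < j.+1 /\ j.+1 <= n.-1 by move: st; rewrite /stage; lia.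
have [k_lt|k_ge] := ltnP k.+1 j.+1.
  exists (fibers (stage_labeling j.+1 k.+1)).
    by exists (j.+1, k.+1) => //=; rewrite /stage; lia.
  exact: contraction_step_stage_next.
have -> : k = j by lia.
have [j_lt|j_ge] := leqP j.+1 n.-2.
  exists (fibers (stage_labeling j 0)); first by exists (j, 0) => //=; rewrite /stage; lia.
  exact: (contraction_step_stage_descend (j := j.+1)).
have -> : j = n.-2 by lia.
have -> : n.-2.+1 = n.-1 by lia.
rewrite fibers_stage_last; last lia.
exists (fibers (stage_labeling n.-2 1)); first by exists (n.-2, 1) => //=; rewrite /stage; lia.
by apply: contraction_step_stage_next; lia.
Qed.

Lemma johnson2_contraction_sequence : 4 < n ->
  exists2 s, contraction_sequence s & cs_width e s <= 2 * (n - 3).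
Proof.
move=> n4; apply: (contraction_sequence_of_invariant (I := stage_partition)).
- by move=> _ [jk _ ->]; exact: fibers_partition.
- by move=> _ [jk st ->]; exact: max_red_degree_stage.
- by move=> P; apply: stage_partition_step.
- by exists (n.-1, 0); rewrite /= ?fibers_stage_first //; rewrite /stage; lia.
- by apply: johnson2_card_gt0; lia.
Qed.

Section Distinguishers.
Variables (u v : T).
Hypothesis uv : u != v.

Definition crossing_pairs : {set 'I_n * 'I_n} :=
  setX ((val u :\: val v) :|: (val v :\: val u)) (~: (val u :|: val v)).

Definition pair_vertex (p : 'I_n * 'I_n) : T := insubd u [set p.1; p.2].

Lemma crossing_pairsP p : p \in crossing_pairs ->
  [/\ (p.1 \in val u) != (p.1 \in val v), p.2 \notin val u, p.2 \notin val v
    & p.1 != p.2].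
Proof.
case: p => z x; rewrite !inE /= negb_or => /andP [z_sym /andP [xu xv]].
have z_uv : (z \in val u) != (z \in val v).
  by move: z_sym; case: (z \in val u); case: (z \in val v).
split=> //; apply: contraNneq z_uv => ->; by rewrite (negbTE xu) (negbTE xv).
Qed.

Lemma val_pair_vertex p : p \in crossing_pairs -> val (pair_vertex p) = [set p.1; p.2].
Proof. by case/crossing_pairsP => _ _ _ p12; rewrite /pair_vertex val_insubd cards2 p12. Qed.

Lemma pair_vertex_distinguishes p :
  p \in crossing_pairs -> pair_vertex p \in distinguishers e u v.
Proof.
move=> pS; have [z_uv xu xv _] := crossing_pairsP pS; have val_p := val_pair_vertex pS.
rewrite inE; apply/and3P; split.
- by apply: contra xu => /eqP <-; rewrite val_p !inE eqxx orbT.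
- by apply: contra xv => /eqP <-; rewrite val_p !inE eqxx orbT.
- rewrite /johnson2_rel val_p !card_setI_set2 //.
  by move: z_uv; case: (_ \in val u); case: (_ \in val v).
Qed.

Lemma pair_vertex_inj : {in crossing_pairs &, injective pair_vertex}.
Proof.
move=> [z x] [z' x'] pS qS /(congr1 val); rewrite !val_pair_vertex //= => /setP zx.
have [z_uv xu xv _] := crossing_pairsP pS; have [z_uv' xu' xv' _] := crossing_pairsP qS.
have /= ez : z = z'.
  have := zx z; rewrite !inE eqxx /= => /esym /orP [/eqP //|/eqP ezx'].
  by move: z_uv; rewrite ezx' (negbTE xu') (negbTE xv').
have := zx x; rewrite !inE eqxx orbT /= -ez => /esym /orP [/eqP exz|/eqP -> //].
by move: z_uv; rewrite -exz (negbTE xu) (negbTE xv).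
Qed.

Lemma card_crossing_pairs (i := #|val u :&: val v|) :
  #|crossing_pairs| = (2 - i + (2 - i)) * (n - (4 - i)).
Proof.
have [cu cv] := (eqP (valP u), eqP (valP v)).
rewrite cardsX cardsU.
have -> : (val u :\: val v) :&: (val v :\: val u) = set0.
  by apply/setP => j; rewrite !inE; case: (j \in val u); case: (j \in val v).
rewrite cards0 subn0 !cardsD cu cv (setIC (val v)) -/i.
by rewrite [#|~: _|]cardsCs setCK card_ord cardsU cu cv -/i.
Qed.

Lemma johnson2_distinguishers : 4 < n -> 2 * (n - 3) <= #|distinguishers e u v|.
Proof.
move=> n4; apply: (@leq_trans #|pair_vertex @: crossing_pairs|).
  rewrite (card_in_imset pair_vertex_inj) card_crossing_pairs.
  by move: (card_johnson2_meet_le1 uv); case: #|_ :&: _| => [|[|]] //= _; lia.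
apply/subset_leq_card/subsetP => _ /imsetP [p pS ->].
exact: pair_vertex_distinguishes.
Qed.

End Distinguishers.

Lemma johnson2_nonadjacent_uniq u w w' : n <= 4 ->
  nonadjacent e u w -> nonadjacent e u w' -> w = w'.
Proof.
move=> n4 /andP [uw euw] /andP [uw' euw'].
have lohi_neq (x y : T) : x != y -> ~~ ((lo x == lo y) && (hi x == hi y)).
  by apply: contra => /andP [/eqP lo_xy /eqP hi_xy]; apply/eqP/johnson2_eq.
move: (lohi_neq _ _ uw) (lohi_neq _ _ uw') euw euw'; rewrite !johnson2_relE /pair_adj.
have := lo_lt_hi u; have := hi_lt_n u; have := lo_lt_hi w; have := hi_lt_n w.
have := lo_lt_hi w'; have := hi_lt_n w'; move=> *; apply: johnson2_eq; lia.
Qed.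

End Johnson.

Theorem mainTheorem6 (n : nat) (hn : 2 <= n) :
  is_twin_width (@johnson2_rel n) (lb1 (@johnson2_rel n)) /\
  lb1 (@johnson2_rel n) = (if 5 <= n then 2 * (n - 3) else 0).
Proof.
case: (leqP 5 n) => [n_ge5|n_le4]; apply: twin_width_lb1.
- apply: lb1_ge_distinguishers => [|u v uv]; first by apply: johnson2_card_gt1; lia.
  exact: johnson2_distinguishers.
- exact: johnson2_contraction_sequence.
- by [].
- apply: comatching_contraction_sequence; last exact: johnson2_card_gt0.
  + exact: johnson2_rel_sym.
  + by move=> u w w'; apply: johnson2_nonadjacent_uniq; rewrite -ltnS.
Qed.
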